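(* Let $0<k<n$, and let $A\in\mathbb{Z}^{k\times n}$ and $B\in\mathbb{Z}^{(n-k)\times n}$ be integer matrices of full row rank such that $A B^T=0$. Then \[ \operatorname{ndet}(L_R(A))=\operatorname{ndet}(L_R(B)), \] that is, \[ \frac{\sqrt{\det(AA^T)}}{\det(L_C(A))}=\frac{\sqrt{\det(BB^T)}}{\det(L_C(B))}. \]
   Context: For an integer matrix $M\in\mathbb{Z}^{m\times n}$, $L_R(M)\subseteq\mathbb{Z}^n$ denotes the lattice generated by the rows of $M$ and $L_C(M)\subseteq\mathbb{Z}^m$ the lattice generated by the columns of $M$. For a lattice $L$ with basis matrix $V$ (a matrix whose rows form a $\mathbb{Z}$-basis of $L$), $\det(L)=\sqrt{\det(VV^T)}$, independent of the choice of basis. For a lattice $\Lambda$ with basis matrix $M$ of full row rank, the normalized determinant is $\operatorname{ndet}(\Lambda)=\det(L_R(M))/\det(L_C(M))$. *)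

From HB Require Import structures.
From mathcomp Require Import all_boot all_order all_algebra.
Set Implicit Arguments. Unset Strict Implicit. Unset Printing Implicit Defensive.
Import Order.TTheory GRing.Theory Num.Theory.
Local Open Scope ring_scope.

Definition in_latR (m n : nat) (M : 'M[int]_(m, n)) (v : 'rV[int]_n) : Prop :=
  exists c : 'rV[int]_m, v = c *m M.

Definition in_latC (m n : nat) (M : 'M[int]_(m, n)) (v : 'rV[int]_m) : Prop :=
  in_latR M^T v.

Definition lat_basis (r n : nat) (V : 'M[int]_(r, n)) (L : 'rV[int]_n -> Prop)
  : Prop :=
  (forall v, L v <-> in_latR V v) /\ (forall c : 'rV[int]_r, c *m V = 0 -> c = 0).

Definition gram_sqrt (R : rcfType) (r n : nat) (V : 'M[int]_(r, n)) : R :=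
  Num.sqrt ((\det (V *m V^T))%:~R).

Definition full_row_rank (m n : nat) (M : 'M[int]_(m, n)) : bool :=
  row_free (map_mx (intr : int -> rat) M).

From HB Require Import structures.
From mathcomp Require Import all_boot all_order all_algebra.
Set Implicit Arguments. Unset Strict Implicit. Unset Printing Implicit Defensive.
Import Order.TTheory GRing.Theory Num.Theory.
Local Open Scope ring_scope.

(* By the Smith normal form, A = U P with U square and nonsingular and P the
   first k rows of a unimodular matrix R, so that U^T is a basis of L_C(A)
   and ndet(L_R(A))^2 = det(P P^T); likewise B = U' Q with Q right-invertible
   over Z, and A B^T = 0 forces Q P^T = 0.  Writing R^-1 = [X Y], the
   identity R R^-1 = 1 gives det(P P^T) = det(Y^T Y) and Q = S Y^T; since Q
   is right-invertible, S is unimodular and det(Q Q^T) = det(Y^T Y). *)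

Lemma mulz_eq1 (x y : int) : x * y = 1 -> y = x.
Proof.
move=> xy; have /intUnitRing.unitzPl : y * x = 1 by rewrite mulrC.
rewrite qualifE => /orP[]/eqP ex; move: xy; rewrite ex ?mul1r // mulN1r.
by move/eqP; rewrite eqr_oppLR => /eqP.
Qed.

Lemma det_sqr_eq1 n (S T : 'M[int]_n) : S *m T = 1%:M -> \det S ^+ 2 = 1.
Proof.
move=> ST; have dST : \det S * \det T = 1 by rewrite -det_mulmx ST det1.
by rewrite expr2 -{2}(mulz_eq1 dST).
Qed.

Lemma det_gram_mull (R : comPzRingType) m n (T : 'M[R]_m) (V : 'M[R]_(m, n)) :
  \det ((T *m V) *m (T *m V)^T) = \det T ^+ 2 * \det (V *m V^T).
Proof.
rewrite trmx_mul !mulmxA !det_mulmx -mulmxA det_mulmx det_tr.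
by rewrite mulrC mulrA expr2 mulrC.
Qed.

Lemma det_gram_tr (R : comPzRingType) m (U : 'M[R]_m) :
  \det (U^T *m U^T^T) = \det U ^+ 2.
Proof. by rewrite trmxK det_mulmx det_tr expr2. Qed.

Lemma mulmx_det_cancel (R : idomainType) k n (U : 'M[R]_k) (V : 'M[R]_n)
    (X : 'M[R]_(k, n)) :
  \det U != 0 -> \det V != 0 -> U *m X *m V = 0 -> X = 0.
Proof.
move=> hU hV E.
have : \adj U *m (U *m X *m V) *m \adj V = 0 by rewrite E mulmx0 mul0mx.
rewrite !mulmxA mul_adj_mx -!mulmxA mul_mx_adj mul_scalar_mx mul_mx_scalar.
rewrite scalerA => /eqP; rewrite scalemx_eq0 mulf_eq0 (negbTE hU) (negbTE hV).
by move/eqP.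
Qed.

Lemma sqrt_sqrM_div (R : rcfType) (x y : int) : x != 0 ->
  Num.sqrt ((x ^+ 2 * y)%:~R : R) / Num.sqrt ((x ^+ 2)%:~R) = Num.sqrt y%:~R.
Proof.
move=> hx; have x2_gt0 : (0 : R) < (x ^+ 2)%:~R by rewrite ltr0z exprn_even_gt0.
rewrite intrM sqrtrM ?ltW // mulrC mulrA mulVf ?mul1r //.
by rewrite sqrtr_eq0 -ltNge.
Qed.

Section LatticeBasis.

Variables (m : nat) (L : 'rV[int]_m -> Prop).

Lemma lat_basis_mulmx_eq0 r (V : 'M[int]_(r, m)) p (X : 'M_(p, r)) :
  lat_basis V L -> X *m V = 0 -> X = 0.
Proof.
move=> [_ freeV] XV; apply/row_matrixP => i; rewrite row0; apply: freeV.
by rewrite -row_mul XV row0.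
Qed.

Lemma lat_basis_change r1 r2 (V1 : 'M[int]_(r1, m)) (V2 : 'M[int]_(r2, m)) :
  lat_basis V1 L -> lat_basis V2 L -> exists T : 'M_(r1, r2), V1 = T *m V2.
Proof.
move=> [L1 _] [L2 _].
have /fin_all_exists[c Ec] i : exists c : 'rV_r2, row i V1 = c *m V2.
  by apply/L2/L1; exists (delta_mx 0 i); rewrite -rowE.
by exists (\matrix_i c i); apply/row_matrixP => i; rewrite row_mul rowK.
Qed.

Lemma det_gram_lat_basis r1 r2 (V1 : 'M[int]_(r1, m)) (V2 : 'M[int]_(r2, m)) :
  lat_basis V1 L -> lat_basis V2 L -> \det (V1 *m V1^T) = \det (V2 *m V2^T).
Proof.
move=> B1 B2.
have [T ET] := lat_basis_change B1 B2; have [S ES] := lat_basis_change B2 B1.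
have TS : T *m S = 1%:M.
  apply/eqP; rewrite -subr_eq0; apply/eqP; apply: (lat_basis_mulmx_eq0 B1).
  by rewrite mulmxBl mul1mx -mulmxA -ES -ET subrr.
have ST : S *m T = 1%:M.
  apply/eqP; rewrite -subr_eq0; apply/eqP; apply: (lat_basis_mulmx_eq0 B2).
  by rewrite mulmxBl mul1mx -mulmxA -ET -ES subrr.
have er : r1 = r2 by apply/eqP; rewrite eqn_leq (mulmx1_min TS) (mulmx1_min ST).
by subst r2; rewrite ET det_gram_mull (det_sqr_eq1 TS) mul1r.
Qed.

End LatticeBasis.

Lemma lat_basis_latC_mul k n (U : 'M[int]_k) (P : 'M[int]_(k, n))
    (P' : 'M_(n, k)) :
  \det U != 0 -> P *m P' = 1%:M -> lat_basis U^T (in_latC (U *m P)).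
Proof.
move=> hU PP'; split => [v|c cU0].
  split=> -[c ->]; first by exists (c *m P^T); rewrite trmx_mul mulmxA.
  exists (c *m P'^T).
  by rewrite trmx_mul mulmxA -(mulmxA c) -trmx_mul PP' trmx1 mulmx1.
apply: (@mulmx_det_cancel _ 1 k 1%:M U^T); rewrite ?det1 ?oner_eq0 ?det_tr //.
by rewrite mul1mx.
Qed.

Lemma full_row_rank_smith k n (A : 'M[int]_(k, n)) : full_row_rank A ->
  exists (U : 'M[int]_k) (R : 'M[int]_n),
    [/\ \det U != 0, R \in unitmx & A = U *m (pid_mx k *m R)].
Proof.
move=> FR.
have [L _ [R uR [d _ EA]]] := int_Smith_normal_form A.
set D : 'M[int]_k := diag_mx (\row_(i < k) d`_i).
have ED : \matrix_(i < k, j < n) (d`_i *+ (i == j :> nat)) = D *m pid_mx k.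
  apply/matrixP => i j; rewrite mul_diag_mx !mxE ltn_ord andbT.
  by case: (i == j :> nat); rewrite ?mulr1n ?mulr0n ?mulr1 ?mulr0.
exists (L *m D), R; split => //; last by rewrite EA ED !mulmxA.
have : row_free (map_mx (intr : int -> rat) (L *m D)).
  move: FR; rewrite /full_row_rank /row_free => /eqP rkA.
  rewrite eqn_leq rank_leq_row -{1}rkA EA ED -!mulmxA mulmxA map_mxM.
  exact: mxrankM_maxl.
by rewrite row_free_unit unitmxE unitfE det_map_mx intr_eq0.
Qed.

Lemma pid_mx_mul_rinv k n (R : 'M[int]_n) : (k <= n)%N -> R \in unitmx ->
  ((pid_mx k : 'M_(k, n)) *m R) *m (invmx R *m pid_mx k) = 1%:M.
Proof.
move=> kn uR.
by rewrite mulmxA -(mulmxA _ R) mulmxV // mulmx1 pid_mx_id // pid_mx_1.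
Qed.

Lemma pid_mx_mul_usubmx (R : pzRingType) k m (M : 'M[R]_(k + m)) :
  (pid_mx k : 'M_(k, k + m)) *m M = usubmx M.
Proof.
by rewrite pid_mx_row -{1}(vsubmxK M) mul_row_col mul1mx mul0mx addr0.
Qed.

Section UnimodularBlock.

Variables (k m : nat) (R : 'M[int]_(k + m)).
Hypothesis uR : R \in unitmx.

Let P := usubmx R.
Let Y := rsubmx (invmx R).

Lemma det_gram_usubmx : \det (P *m P^T) = \det (Y^T *m Y).
Proof.
set X := lsubmx (invmx R).
have ER : R = col_mx P (dsubmx R) by rewrite vsubmxK.
have ERi : invmx R = row_mx X Y by rewrite hsubmxK.
have := mulmxV uR; rewrite {1}ER ERi mul_col_row scalar_mx_block.
case/eq_block_mx => PX PY _ P'Y.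
have dRRi : \det R * \det (invmx R) = 1 by rewrite -det_mulmx mulmxV // det1.
have detPPT : \det R * \det (col_mx P Y^T) = \det (P *m P^T).
  rewrite -(det_tr (col_mx P Y^T)) -det_mulmx tr_col_mx trmxK {1}ER.
  by rewrite mul_col_row PY P'Y det_lblock det1 mulr1.
have detYTY : \det (col_mx P Y^T) * \det (invmx R) = \det (Y^T *m Y).
  by rewrite -det_mulmx ERi mul_col_row PX PY det_lblock det1 mul1r.
by rewrite -detPPT -detYTY (mulz_eq1 dRRi) mulrC.
Qed.

Lemma usubmx_orthogonal_factor p (Q : 'M[int]_(p, k + m)) :
  Q *m P^T = 0 -> Q = (Q *m (dsubmx R)^T) *m Y^T.
Proof.
move=> QP; have RRiT : R^T *m (invmx R)^T = 1%:M.
  by rewrite -trmx_mul mulVmx // trmx1.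
rewrite -{1}(mulmx1 Q) -RRiT -{1}(vsubmxK R) -(hsubmxK (invmx R)).
by rewrite tr_col_mx tr_row_mx mul_row_col mulmxDr !mulmxA QP mul0mx add0r.
Qed.

Lemma det_gram_orthogonal_usubmx (Q : 'M[int]_(m, k + m))
    (Q' : 'M_(k + m, m)) :
  Q *m Q' = 1%:M -> Q *m P^T = 0 -> \det (P *m P^T) = \det (Q *m Q^T).
Proof.
move=> QQ' /usubmx_orthogonal_factor EQ.
have S_rinv : (Q *m (dsubmx R)^T) *m (Y^T *m Q') = 1%:M by rewrite mulmxA -EQ.
by rewrite det_gram_usubmx EQ det_gram_mull trmxK (det_sqr_eq1 S_rinv) mul1r.
Qed.

End UnimodularBlock.

Theorem theorem2p5 (R : rcfType) (k n : nat) (hk : (0 < k)%N) (hkn : (k < n)%N)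
  (A : 'M[int]_(k, n)) (B : 'M[int]_(n - k, n)) :
  full_row_rank A -> full_row_rank B -> A *m B^T = 0 ->
  (exists (r : nat) (VA : 'M[int]_(r, k)), lat_basis VA (in_latC A)) /\
  (exists (s : nat) (VB : 'M[int]_(s, n - k)), lat_basis VB (in_latC B)) /\
  (forall (r s : nat) (VA : 'M[int]_(r, k)) (VB : 'M[int]_(s, n - k)),
     lat_basis VA (in_latC A) -> lat_basis VB (in_latC B) ->
     gram_sqrt R A / gram_sqrt R VA = gram_sqrt R B / gram_sqrt R VB).
Proof.
move=> FA FB AB.
set m := (n - k)%N in B FB AB *.
have en : n = (k + m)%N by rewrite /m subnKC // ltnW.
clearbody m; subst n.
have [U [RA [hU uRA EA]]] := full_row_rank_smith FA.
have [U' [RB [hU' uRB EB]]] := full_row_rank_smith FB.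
have bA := lat_basis_latC_mul hU (pid_mx_mul_rinv (leq_addr _ _) uRA).
have bB := lat_basis_latC_mul hU' (pid_mx_mul_rinv (leq_addl _ _) uRB).
rewrite -EA in bA; rewrite -EB in bB.
split; first by exists k, U^T.
split; first by exists m, U'^T.
move=> r s VA VB hA hB.
rewrite /gram_sqrt (det_gram_lat_basis hA bA) (det_gram_lat_basis hB bB).
rewrite !det_gram_tr EA EB !det_gram_mull !sqrt_sqrM_div // pid_mx_mul_usubmx.
congr (Num.sqrt _%:~R).
apply: (det_gram_orthogonal_usubmx uRA (pid_mx_mul_rinv (leq_addl _ _) uRB)).
apply: (@mulmx_det_cancel int m k U' U^T); rewrite ?det_tr //.
rewrite -pid_mx_mul_usubmx mulmxA -EB -mulmxA -trmx_mul -EA.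
by rewrite -(trmxK B) -trmx_mul AB trmx0.
Qed.
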